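(* Let $\alpha\in(0,1)$, let $A\subset\mathbb R$ be bounded, and let $f:A\to\mathbb R$ be uniformly continuous with $V_\alpha(f,A)<\infty$. Then $\lambda(\overline{f(A)})=0$.
   Context: $\lambda$ denotes Lebesgue measure on $\mathbb R$. $V_\alpha(f,A)$ is the supremum of $\sum_{i=1}^m|f(b_i)-f(a_i)|^\alpha$ over all finite collections of non-overlapping intervals $[a_i,b_i]$ with $a_i,b_i\in A$. *)

From HB Require Import structures.
From mathcomp Require Import all_boot all_order all_algebra.
From mathcomp Require Import all_classical all_reals all_analysis.
Set Implicit Arguments. Unset Strict Implicit. Unset Printing Implicit Defensive.
Import Order.TTheory GRing.Theory Num.Theory.
Import numFieldNormedType.Exports.
Local Open Scope classical_set_scope.
Local Open Scope ring_scope.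

Definition nonoverlapping_in {R : realType} (A : set R) (m : nat)
  (a b : 'I_m -> R) : Prop :=
  (forall i, A (a i) /\ A (b i) /\ a i <= b i) /\
  (forall i j, i != j -> b i <= a j \/ b j <= a i).

Definition Valpha {R : realType} (alpha : R) (f : R -> R) (A : set R) : \bar R :=
  ereal_sup [set x : \bar R | exists (m : nat) (a b : 'I_m -> R),
     nonoverlapping_in A a b /\
     x = (\sum_(i < m) (`|f (b i) - f (a i)| `^ alpha))%:E].

Definition unif_cont_on {R : realType} (f : R -> R) (A : set R) : Prop :=
  forall e : R, 0 < e -> exists2 d : R, 0 < d &
    forall x y, A x -> A y -> `|x - y| < d -> `|f x - f y| < e.

Definition bounded_R {R : realType} (A : set R) : Prop :=
  exists M : R, forall x, A x -> `|x| <= M.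

(* Fix eta > 0 and cut the bounded set A into finitely many cells shorter than
   the modulus of uniform continuity of f for eta.  In each nonempty cell pick
   points c, y such that |f y - f c| is at least half the supremum of
   |f x - f c| over the cell: the image of the cell then lies in a closed
   interval of length 4 e, where e = |f y - f c| < eta, so e <= e^alpha
   eta^(1 - alpha).  The pairs (c, y) coming from distinct cells span
   non-overlapping intervals, and the finite union of the closed intervals also
   covers the closure of f(A); hence that closure has measure at most
   4 eta^(1 - alpha) V_alpha(f, A), which tends to 0 with eta. *)

From HB Require Import structures.
From mathcomp Require Import all_boot all_order all_algebra.
From mathcomp Require Import all_classical all_reals all_analysis.
From mathcomp Require Import lra.
Set Implicit Arguments. Unset Strict Implicit.
Import Order.TTheory GRing.Theory Num.Theory.
Import numFieldNormedType.Exports.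
Local Open Scope classical_set_scope.
Local Open Scope ring_scope.

Section real_lemmas.
Context {R : realType}.

Lemma ler_powR_interpolate (a e t : R) : 0 <= a <= 1 -> 0 <= e <= t ->
  e <= e `^ a * t `^ (1 - a).
Proof.
move=> /andP[a0 a1] /andP[e0 et].
rewrite -{1}(powRr1 e0) -{1}(subrKC a 1) powRD ?subrKC ?oner_eq0//.
apply: ler_wpM2l; first exact: powR_ge0.
by apply: ge0_ler_powR; rewrite ?subr_ge0// nnegrE (le_trans e0).
Qed.

Lemma ex_ge_half_sup (T : Type) (S : set T) (g : T -> R) (M : R) :
  S !=set0 -> (forall x, S x -> 0 <= g x <= M) ->
  exists2 y, S y & forall x, S x -> g x <= 2 * g y.
Proof.
move=> [x0 Sx0] gM.
have supg : has_sup (g @` S).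
  split; first by exists (g x0), x0.
  by exists M => _ [x Sx <-]; have /andP[] := gM x Sx.
have le_sup x : S x -> g x <= sup (g @` S).
  by move=> Sx; apply: sup_upper_bound => //; exists x.
have [s_le0|s_gt0] := leP (sup (g @` S)) 0.
  exists x0 => // x Sx; have /andP[gx0 _] := gM x0 Sx0.
  by apply: le_trans (le_sup x Sx) _; apply: le_trans s_le0 _; rewrite mulr_ge0.
have [_ [y Sy <-] gy] := sup_adherent (divr_gt0 s_gt0 (ltr0Sn R 1)) supg.
by exists y => // x /le_sup; lra.
Qed.

Lemma bounded_cells (A : set R) (d : R) : bounded_R A -> 0 < d ->
  exists p : R -> nat, [/\ finite_set (p @` A),
    forall x z, A x -> A z -> p x = p z -> `|x - z| < d &
    forall x z, A x -> A z -> (p x < p z)%N -> x < z].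
Proof.
move=> [M AM] d0; pose u x := (x + M) / d.
have u_ge0 x : A x -> 0 <= u x.
  by move=> Ax; rewrite divr_ge0 ?(ltW d0)//; have := AM x Ax; rewrite ler_norml; lra.
have le_u x z : x <= z -> u x <= u z by move=> xz; rewrite ler_pM2r ?invr_gt0; lra.
exists (fun x => Num.truncn (u x)); split.
- apply: (@sub_finite_set _ _ `I_(Num.truncn (u M)).+1); last exact: finite_II.
  move=> _ [x Ax <-] /=; rewrite ltnS le_truncn// le_u//.
  by have := AM x Ax; rewrite ler_norml => /andP[].
- move=> x z Ax Az pxz.
  have := truncn_itv (u_ge0 x Ax); have := truncn_itv (u_ge0 z Az); rewrite pxz.
  move=> /andP[zl zr] /andP[xl xr].
  have -> : x - z = d * (u x - u z) by rewrite /u -mulrBl mulrC divfK ?gt_eqF//; lra.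
  by rewrite normrM gtr0_norm// -ltr_pdivlMl// mulVf ?gt_eqF// ltr_norml; lra.
- move=> x z _ _; apply: contraTT; rewrite -leNgt -leqNgt => zx.
  exact/le_truncn/le_u.
Qed.
End real_lemmas.

Definition nonoverlapping_pairs (R : realType) (I : Type) (D : set I)
    (u v : I -> R) : Prop :=
  forall i j, D i -> D j -> i <> j ->
    Num.max (u i) (v i) <= Num.min (u j) (v j) \/
    Num.max (u j) (v j) <= Num.min (u i) (v i).

Section Valpha_bounds.
Variables (R : realType) (alpha : R) (f : R -> R) (A : set R).

Lemma Valpha_ge0 : (0 <= Valpha alpha f A)%E.
Proof.
apply: ereal_sup_ubound; exists 0%N, (fun=> 0), (fun=> 0).
by split; [split; case | rewrite big_ord0].
Qed.

Lemma Valpha_ge_fsum (I : choiceType) (D : set I) (u v : I -> R) :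
  finite_set D -> (forall i, D i -> A (u i) /\ A (v i)) ->
  nonoverlapping_pairs D u v ->
  (\sum_(i \in D) (`|f (v i) - f (u i)| `^ alpha)%:E <= Valpha alpha f A)%E.
Proof.
move=> Dfin uvA disj; rewrite fsbig_finite//= big_tnth sumEFin.
set s := in_tuple _; have Ds j : D (tnth s j).
  by have := mem_tnth j s; rewrite in_fset_set// inE.
apply: ereal_sup_ubound.
exists _, (fun j => Num.min (u (tnth s j)) (v (tnth s j))),
          (fun j => Num.max (u (tnth s j)) (v (tnth s j))); split.
- split=> [j | j k jk].
    have [Au Av] := uvA _ (Ds j).
    by rewrite ge_min le_max lexx /Num.min /Num.max; case: ltP.
  apply: disj => // /(tuple_uniqP s (finmap.fset_uniq _)) eq_jk.
  by rewrite eq_jk eqxx in jk.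
- congr EFin; apply: eq_bigr => j _.
  by case: leP => _; rewrite // distrC.
Qed.

End Valpha_bounds.

Lemma lebesgue_closure_le_itv_cover (R : realType) (I : choiceType) (D : set I)
    (c r : I -> R) (E : set R) :
  finite_set D -> (forall i, D i -> 0 <= r i) ->
  E `<=` \bigcup_(i in D) [set` `[c i - r i, c i + r i]] ->
  (lebesgue_measure (closure E) <= \sum_(i \in D) (2 * r i)%:E)%E.
Proof.
move=> Dfin r0 EDc; pose J i := [set` `[c i - r i, c i + r i]] : set R.
have closedJ : closed (\bigcup_(i in D) J i).
  by apply: closed_bigcup => // i _; exact: itv_closed.
apply: le_trans (content_sub_fsum (@lebesgue_measure R) (A_ := J) Dfin _ _ _) _.
- by move=> i _; exact: measurable_itv.
- by apply: measurable_realfun.closed_measurable; exact: closed_closure.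
- by rewrite [X in _ `<=` X](closure_id _).1 //; exact: closureS.
apply: lee_fsum => // i Di; rewrite /J /= lebesgue_measure_itv/= lte_fin.
case: ltP => _; last by rewrite lee_fin mulr_ge0 ?r0.
by rewrite -EFinB lee_fin; lra.
Qed.

Lemma unif_cont_image_cover (R : realType) (eta : R) (A : set R) (f : R -> R) :
  0 < eta -> bounded_R A -> unif_cont_on f A ->
  exists (D : set nat) (c y : nat -> R), [/\ finite_set D,
    forall k, D k -> [/\ A (c k), A (y k) & `|f (y k) - f (c k)| < eta],
    nonoverlapping_pairs D c y &
    f @` A `<=` \bigcup_(k in D)
      [set` `[f (c k) - 2 * `|f (y k) - f (c k)|, f (c k) + 2 * `|f (y k) - f (c k)|]]].
Proof.
move=> eta0 Abd fuc; have [d d0 fclose] := fuc eta eta0.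
have [p [pfin pclose pmono]] := bounded_cells Abd d0.
pose cell k := [set x | A x /\ p x = k].
have cell_close k x z : cell k x -> cell k z -> `|f z - f x| < eta.
  by move=> [Ax <-] [Az pzx]; apply: fclose => //; apply: pclose.
have witnesses k : exists cy : R * R, (p @` A) k ->
    [/\ cell k cy.1, cell k cy.2 &
      forall x, cell k x -> `|f x - f cy.1| <= 2 * `|f cy.2 - f cy.1|].
  have [[c Ac <-]|nk] := pselect ((p @` A) k); last by exists (0, 0) => /nk.
  have cellc : cell (p c) c by [].
  have [y celly ybig] : exists2 y, cell (p c) y &
      forall x, cell (p c) x -> `|f x - f c| <= 2 * `|f y - f c|.
    apply: (@ex_ge_half_sup _ _ _ _ eta); first by exists c.
    by move=> x cellx; rewrite normr_ge0 (ltW (cell_close _ c x cellc cellx)).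
  by exists (c, y).
have [cy cyP] := choice witnesses.
exists (p @` A), (fun k => (cy k).1), (fun k => (cy k).2); split => //.
- move=> k Dk; have [c1 y1 _] := cyP k Dk.
  by split; [exact: c1.1 | exact: y1.1 | exact: cell_close c1 y1].
- have hull_le i j : (p @` A) i -> (p @` A) j -> (i < j)%N ->
      Num.max (cy i).1 (cy i).2 <= Num.min (cy j).1 (cy j).2.
    move=> Di Dj ij; have [[Aci pci] [Ayi pyi] _] := cyP i Di.
    have [[Acj pcj] [Ayj pyj] _] := cyP j Dj.
    by rewrite ge_max !le_min !ltW ?pmono ?pci ?pyi ?pcj ?pyj.
  move=> k l Dk Dl kl; have [lt_kl|lt_lk|eq_kl] := ltngtP k l; last by [].
  + by left; exact: hull_le.
  + by right; exact: hull_le.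
- move=> _ [x Ax <-]; exists (p x); first by exists x.
  have [_ _ /(_ x (conj Ax erefl))] := cyP (p x) (ex_intro2 _ _ x Ax erefl).
  by rewrite /= in_itv /= -ler_distlC distrC.
Qed.

Lemma lebesgue_closure_image_le (R : realType) (alpha eta : R) (A : set R)
    (f : R -> R) :
  0 <= alpha <= 1 -> 0 < eta -> bounded_R A -> unif_cont_on f A ->
  (lebesgue_measure (closure (f @` A)) <=
     (4 * eta `^ (1 - alpha))%:E * Valpha alpha f A)%E.
Proof.
move=> alpha01 eta0 Abd fuc.
have [D [c [y [Dfin cyA cy_disj cover]]]] := unif_cont_image_cover eta0 Abd fuc.
pose e k := `|f (y k) - f (c k)|.
apply: le_trans (lebesgue_closure_le_itv_cover Dfin _ cover) _.
  by move=> k _; rewrite mulr_ge0.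
apply: (@le_trans _ _ (\sum_(k \in D) (4 * eta `^ (1 - alpha))%:E * (e k `^ alpha)%:E)%E).
  apply: lee_fsum => // k Dk; rewrite -EFinM lee_fin.
  have [_ _ ek_lt] := cyA k Dk.
  have : e k <= e k `^ alpha * eta `^ (1 - alpha).
    by rewrite ler_powR_interpolate // normr_ge0 ltW.
  rewrite -/(e k); lra.
rewrite -ge0_mule_fsumr => [|k]; last by rewrite lee_fin powR_ge0.
apply: lee_wpmul2l; first by rewrite lee_fin mulr_ge0// powR_ge0.
by apply: Valpha_ge_fsum => // k /cyA[].
Qed.

Theorem lemma2p2 (R : realType) (alpha : R) (A : set R) (f : R -> R) :
  0 < alpha < 1 ->
  bounded_R A ->
  unif_cont_on f A ->
  (Valpha alpha f A < +oo)%E ->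
  (@lebesgue_measure R) (closure (f @` A)) = 0%E.
Proof.
move=> /andP[alpha0 alpha1] Abd fuc Vfin.
have [V V0 VE] : exists2 V, 0 <= V & Valpha alpha f A = V%:E.
  have V_ge0 := Valpha_ge0 alpha f A.
  by exists (fine (Valpha alpha f A)); rewrite ?fine_ge0 ?fineK ?ge0_fin_numE.
apply/eqP; rewrite -measure_le0; apply/lee_addgt0Pr => eps eps0; rewrite add0e.
pose t := eps / (4 * V + 1).
have t0 : 0 < t by rewrite divr_gt0 // ltr_wpDl // mulr_ge0.
have alpha01 : 0 <= alpha <= 1 by rewrite !ltW.
have := lebesgue_closure_image_le alpha01 (powR_gt0 (1 - alpha)^-1 t0) Abd fuc.
rewrite -powRrM mulVf ?subr_eq0 ?gt_eqF // (powRr1 (ltW t0)) VE -EFinM.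
move/le_trans; apply; rewrite lee_fin.
have : t * (4 * V + 1) = eps by rewrite divfK // gt_eqF // ltr_wpDl // mulr_ge0.
lra.
Qed.
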